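(* Let $(V,E)$ be a finite connected $n$-valent graph without loops with a fixed connection $\nabla$, and let $S$ be its face poset. There are bijections between the following three sets: (i) functions $\lambda\colon\mathcal F\to\mathbb Z^n$ on the set $\mathcal F$ of facets such that for every vertex $v$ the values $\{\lambda(F)\mid F\in\mathcal F,\ v\in F\}$ form a basis of $\mathbb Z^n$; (ii) characteristic functions on $S^{op}$; (iii) $T$-graph structures $(V,E,\nabla,\beta)$ on $(V,E)$ with the connection $\nabla$ (hence with face poset $S$).
   Context: A connection is a family of bijections $\nabla_e$ from the edges with initial vertex $i(e)$ to those with initial vertex $t(e)$ with $\nabla_e e=\overline e$ and $\nabla_{\overline e}=\nabla_e^{-1}$. A face of valence $i$ is a connected $i$-valent subgraph invariant under the connection along its edges; $S$ is the set of faces ordered by inclusion; facets are faces of valence $n-1$. A characteristic function on $S^{op}$ is a function $\lambda$ on facets such that for every face $F$ the values of $\lambda$ on the facets containing $F$ form a basis of a direct summand of $\mathbb Z^n$ of rank $n-\rk F$ ($\rk F$ the valence of $F$). A $T$-graph is $(V,E,\nabla,\beta)$ with $\beta\colon E\to\mathbb Z^n$ such that (i) $\beta(\overline e)=-\delta(e)\beta(e)$ with $\delta(e)\in\{\pm1\}$; (ii) for each vertex $v$, $\{\beta(e)\mid i(e)=v\}$ is a basis of $\mathbb Z^n$; (iii) for edges $e,e'$ with common origin, $\beta(\nabla_e e')=\beta(e')+d_{e,e'}\beta(e)$ for some $d_{e,e'}\in\mathbb Z$. *)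

From HB Require Import structures.
From mathcomp Require Import all_boot all_order all_algebra.
Set Implicit Arguments. Unset Strict Implicit. Unset Printing Implicit Defensive.
Import Order.TTheory GRing.Theory Num.Theory.
Local Open Scope ring_scope.

(* A finite graph with oriented edges: every (geometric) edge appears with
   both orientations; [erev e] is the reversed edge  \overline e,
   [src e] = i(e), [tgt e] = t(e). *)
Record graph := Graph {
  gV : finType;
  gE : finType;
  src : gE -> gV;
  tgt : gE -> gV;
  erev : gE -> gE;
  erevK : involutive erev;
  src_erev : forall e, src (erev e) = tgt e }.

Section Graphs.
Variable G : graph.
Local Notation V := (gV G).
Local Notation E := (gE G).
Local Notation src := (@src G).
Local Notation tgt := (@tgt G).
Local Notation erev := (@erev G).

Definition loopless : Prop := forall e : E, src e != tgt e.

Definition regular (n : nat) : Prop :=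
  forall v : V, #|[set e : E | src e == v]| = n.

Definition adj : rel V := [rel x y | [exists e : E, (src e == x) && (tgt e == y)]].

Definition gconnected : Prop := forall u w : V, connect adj u w.

(* A connection: nab e is a bijection from the edges starting at i(e) to the
   edges starting at t(e), with nab_e e = \overline e and
   nab_{\overline e} = nab_e^{-1}.  (Values of nab e e' for i(e') <> i(e) are
   irrelevant.)  Applying the inverse law to e and to \overline e gives a
   two-sided inverse, hence bijectivity. *)
Definition is_connection (nab : E -> E -> E) : Prop :=
  [/\ forall e e', src e' = src e -> src (nab e e') = tgt e,
      forall e, nab e e = erev e &
      forall e e', src e' = src e -> nab (erev e) (nab e e') = e'].

Variable n : nat.
Variable nab : E -> E -> E.

Definition subadj (F : {set V} * {set E}) : rel V :=
  [rel x y | [exists e in F.2, (src e == x) && (tgt e == y)]].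

Definition is_face (k : nat) (F : {set V} * {set E}) : bool :=
  [&& F.1 != set0,
      [forall e in F.2, (src e \in F.1) && (erev e \in F.2)],
      [forall v in F.1, #|[set e in F.2 | src e == v]| == k],
      [forall u in F.1, forall w in F.1, connect (subadj F) u w] &
      [forall e in F.2, forall e' in F.2, (src e' == src e) ==> (nab e e' \in F.2)]].

Definition face_le (F F' : {set V} * {set E}) : bool :=
  (F.1 \subset F'.1) && (F.2 \subset F'.2).

(* facets: faces of valence n-1 (there are none when n = 0) *)
Definition is_facet (F : {set V} * {set E}) : bool := (0 < n)%N && is_face n.-1 F.

Definition facet := {F : {set V} * {set E} | is_facet F}.

Definition zindep (I : finType) (A : {pred I}) (f : I -> 'rV[int]_n) : Prop :=
  forall c : I -> int, \sum_(i in A) c i *: f i = 0 -> forall i, i \in A -> c i = 0.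

Definition zspan (I : finType) (A : {pred I}) (f : I -> 'rV[int]_n)
  (x : 'rV[int]_n) : Prop :=
  exists c : I -> int, x = \sum_(i in A) c i *: f i.

Definition zbasis (I : finType) (A : {pred I}) (f : I -> 'rV[int]_n) : Prop :=
  zindep A f /\ forall x, zspan A f x.

Definition zsubmodule (M : 'rV[int]_n -> Prop) : Prop :=
  [/\ M 0, forall x y, M x -> M y -> M (x + y) & forall x, M x -> M (- x)].

Definition direct_summand (L : 'rV[int]_n -> Prop) : Prop :=
  exists M, [/\ zsubmodule M,
                forall x, exists l m, [/\ L l, M m & x = l + m] &
                forall x, L x -> M x -> x = 0].

Definition basis_of_summand (I : finType) (A : {pred I}) (f : I -> 'rV[int]_n)
  (r : nat) : Prop :=
  [/\ zindep A f, #|A| = r & direct_summand (zspan A f)].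

Definition facets_at (v : V) : {pred facet} := [pred F : facet | v \in (val F).1].

Definition facets_above (F : {set V} * {set E}) : {pred facet} :=
  [pred F' : facet | face_le F (val F')].

Definition vertex_basis_fun (lam : facet -> 'rV[int]_n) : Prop :=
  forall v : V, zbasis (facets_at v) lam.

Definition characteristic_fun (lam : facet -> 'rV[int]_n) : Prop :=
  forall (k : nat) (F : {set V} * {set E}), is_face k F ->
    basis_of_summand (facets_above F) lam (n - k).

Definition tgraph_structure (beta : E -> 'rV[int]_n) : Prop :=
  [/\ forall e, exists2 delta : int, (delta == 1) || (delta == -1) &
                beta (erev e) = - (delta *: beta e),
      forall v : V, zbasis [pred e : E | src e == v] beta &
      forall e e', src e' = src e ->
        exists d : int, beta (nab e e') = beta e' + d *: beta e].

End Graphs.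

From HB Require Import structures.
From mathcomp Require Import all_boot all_order all_algebra zify.
From Stdlib Require Import ClassicalEpsilon ProofIrrelevance FunctionalExtensionality.
Set Implicit Arguments. Unset Strict Implicit. Unset Printing Implicit Defensive.
Import Order.TTheory GRing.Theory Num.Theory.
Local Open Scope ring_scope.

(* A facet F through a vertex v contains every edge at v but one, [miss v F],
   and is determined by v and that edge, since the connection transports the
   edges at v along F; so [miss v] injects the facets at v into the n edges at v.
   When lambda gives bases at the vertices there are at least n facets at v, so
   [miss v] is onto and the facets containing a k-face through v correspond to
   the n - k edges at v outside it: their lambda-values are part of a basis.
   Conversely the vertex {v} is a 0-face, and a basis of a rank-n direct summand
   of Z^n spans Z^n.
   Between (ii) and (iii), beta(e) is dual to the basis at i(e):
   <lambda F, beta e> = [e \notin F].  Both beta(erev e) and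
   beta(nab_e e') - beta(e') are orthogonal to lambda F for all facets F
   containing e, hence lie on the line Z beta(e).  Conversely lambda F is the
   dual vector with the same pairing at one vertex of F; the pairing then holds
   at every vertex of F because the connection preserves orthogonality to beta
   along edges of F.  The facet through v missing e is the component at v of
   the edges orthogonal to the vector dual to beta(e). *)

Lemma connect_ind (T : finType) (r : rel T) (P : T -> Prop) x y :
  connect r x y -> P x -> (forall a b, P a -> r a b -> P b) -> P y.
Proof.
move=> /connectP[p + ->]; elim: p x => //= a p IHp x /andP[rxa rp] Px step.
exact: IHp rp (step _ _ Px rxa) step.
Qed.

Lemma mulmx1C_eqdim (R : comPzRingType) m p (X : 'M[R]_(m, p)) (Y : 'M[R]_(p, m)) :
  m = p -> X *m Y = 1%:M -> Y *m X = 1%:M.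
Proof. by move=> emp; subst m; apply: mulmx1C. Qed.

Lemma sig_bijective (T U : Type) (P : T -> Prop) (Q : U -> Prop) (f : T -> U) (g : U -> T)
    (fP : forall x, P x -> Q (f x)) (gQ : forall y, Q y -> P (g y)) :
  (forall x, P x -> g (f x) = x) -> (forall y, Q y -> f (g y) = y) ->
  exists h : {x | P x} -> {y | Q y}, bijective h.
Proof.
move=> gK fK; exists (fun x => exist Q (f (sval x)) (fP _ (svalP x))).
exists (fun y => exist P (g (sval y)) (gQ _ (svalP y))) => [[x Px] | [y Qy]] /=;
  apply: ProofIrrelevanceTheory.subset_eq_compat; [exact: gK | exact: fK].
Qed.

Section IntegerLattice.
Variable n : nat.
Local Notation rV := 'rV[int]_n.

Definition dot (x y : rV) : int := \sum_k x 0 k * y 0 k.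

Lemma dotC x y : dot x y = dot y x.
Proof. by apply: eq_bigr => k _; rewrite mulrC. Qed.

Fact dot_is_scalar x : scalar (dot x).
Proof.
move=> a y z; rewrite /dot big_distrr -big_split; apply: eq_bigr => k _ /=.
by rewrite !mxE mulrDr mulrCA.
Qed.

HB.instance Definition _ x :=
  GRing.isLinear.Build int rV int *%R (dot x) (dot_is_scalar x).

Lemma dot_sumr (I : finType) (A : {pred I}) (c : I -> int) (f : I -> rV) x :
  dot x (\sum_(i in A) c i *: f i) = \sum_(i in A) c i * dot x (f i).
Proof. by rewrite linear_sum; apply: eq_bigr => i _; rewrite linearZ. Qed.

Lemma dot_delta x k : dot x 'e_k = x 0 k.
Proof.
rewrite /dot (bigD1 k) //= big1 => [|j /negbTE jk]; rewrite !mxE ?eqxx ?jk.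
  by rewrite mulr1 addr0.
by rewrite mulr0.
Qed.

Lemma zsubmoduleZ (M : rV -> Prop) z x : zsubmodule M -> M x -> M (z *: x).
Proof.
case=> M0 MD MN Mx.
have Mxn m : M (x *+ m) by elim: m => [|m IHm]; rewrite ?mulr0n ?mulrS //; apply: MD.
rewrite -[z]intz scaler_int; case: z => m; rewrite ?NegzE ?mulrNz.
  exact: Mxn.
by apply: MN; apply: Mxn.
Qed.

Lemma zsubmodule_sum (M : rV -> Prop) (J : finType) (P : {pred J}) (d : J -> int)
    (f : J -> rV) :
  zsubmodule M -> (forall j, M (f j)) -> M (\sum_(j in P) d j *: f j).
Proof.
move=> subM Mf; have [M0 MD _] := subM.
by apply: big_ind => // j _; apply: zsubmoduleZ.
Qed.

Lemma zspan_zsubmodule (I : finType) (A : {pred I}) (b : I -> rV) :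
  zsubmodule (zspan A b).
Proof.
split=> [|_ _ [c ->] [d ->]|_ [c ->]].
- by exists (fun=> 0); rewrite big1 // => i _; rewrite scale0r.
- by exists (fun i => c i + d i); rewrite -big_split; apply: eq_bigr => i _; rewrite scalerDl.
- by exists (fun i => - c i); rewrite -sumrN; apply: eq_bigr => i _; rewrite scaleNr.
Qed.

Section Families.
Variables (I : finType) (A : {pred I}) (b : I -> rV).

Lemma zspan_dot_inj y z : (forall x, zspan A b x) ->
  (forall i, i \in A -> dot (b i) y = dot (b i) z) -> y = z.
Proof.
move=> spanb eq_yz; apply/rowP => k.
have [c ek] := spanb 'e_k.
rewrite -[y 0 k]dot_delta -[z 0 k]dot_delta ek !dot_sumr.
by apply: eq_bigr => i iA; rewrite ![dot _ (b i)]dotC eq_yz.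
Qed.

Lemma eq_zbasis A' : A =i A' -> zbasis A b -> zbasis A' b.
Proof.
move=> eqA [indb spanb]; split=> [c c0 i|x].
  by rewrite -eqA; apply: indb; rewrite -[RHS]c0; apply: eq_bigl => j; rewrite eqA.
by have [c ->] := spanb x; exists c; apply: eq_bigl => j; rewrite eqA.
Qed.

Lemma sum_delta_scale j : j \in A -> \sum_(i in A) (i == j)%:R *: b i = b j.
Proof.
move=> jA; rewrite (bigD1 j) //= eqxx scale1r big1 ?addr0 // => i /andP[_ /negbTE ->].
by rewrite scale0r.
Qed.

Lemma zspan_mem j : j \in A -> zspan A b (b j).
Proof. by move=> jA; exists (fun i => (i == j)%:R); rewrite sum_delta_scale. Qed.

Lemma zindep_coef_delta (l : 'I_n -> rV) (a : 'I_n -> I -> int) :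
  zindep A b -> (forall k, l k = \sum_(i in A) a k i *: b i) ->
  (forall j, j \in A -> b j = \sum_k b j 0 k *: l k) ->
  forall i j, i \in A -> j \in A -> \sum_k b j 0 k * a k i = (i == j)%:R.
Proof.
move=> indb la bl i j iA jA; apply/eqP; rewrite -subr_eq0; apply/eqP.
move: i iA; apply: indb.
under eq_bigr => i _ do rewrite scalerBl.
rewrite sumrB sum_delta_scale // {2}(bl j jA); apply/eqP; rewrite subr_eq0; apply/eqP.
under [RHS]eq_bigr => k _ do rewrite la scaler_sumr.
rewrite exchange_big; apply: eq_bigr => i _.
by rewrite scaler_suml; apply: eq_bigr => k _; rewrite scalerA.
Qed.

Definition rowsmx : 'M[int]_(#|A|, n) := \matrix_(p, k) b (enum_val p) 0 k.

Definition coefmx (a : 'I_n -> I -> int) : 'M[int]_(n, #|A|) :=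
  \matrix_(k, p) a k (enum_val p).

Lemma coefmx_rowsmx_eq1 a :
  coefmx a *m rowsmx = 1%:M <-> forall k, 'e_k = \sum_(i in A) a k i *: b i.
Proof.
have entry k k' : (coefmx a *m rowsmx) k k' = (\sum_(i in A) a k i *: b i) 0 k'.
  by rewrite !mxE summxE [RHS]big_enum_val; apply: eq_bigr => p _; rewrite !mxE.
have one_entry k k' : (1%:M : 'M[int]_n) k k' = ('e_k : rV) 0 k'.
  by rewrite !mxE eqxx eq_sym.
split=> [/matrixP eq1 k | ek]; [apply/rowP => k' | apply/matrixP => k k'].
  by rewrite -entry eq1 one_entry.
by rewrite entry one_entry -ek.
Qed.

Lemma zspan_card_geq : (forall x, zspan A b x) -> (n <= #|A|)%N.
Proof.
move=> spanb.
have /fin_all_exists[a ea] : forall k : 'I_n, exists a : I -> int,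
  'e_k = \sum_(i in A) a i *: b i := fun k => spanb 'e_k.
by apply: (@mulmx1_min _ _ _ (coefmx a) rowsmx); apply/coefmx_rowsmx_eq1.
Qed.

Lemma zbasis_dot_solve (t : I -> int) :
  zbasis A b -> exists y, forall j, j \in A -> dot (b j) y = t j.
Proof.
case=> indb spanb.
have /fin_all_exists[a ea] : forall k : 'I_n, exists a : I -> int,
  'e_k = \sum_(i in A) a i *: b i := fun k => spanb 'e_k.
have delta := zindep_coef_delta indb ea (fun j _ => row_sum_delta (b j)).
exists (\row_k \sum_(i in A) a k i * t i) => j jA.
transitivity (\sum_(i in A) (\sum_k b j 0 k * a k i) * t i).
  under [RHS]eq_bigr => i _ do rewrite big_distrl.
  rewrite [RHS]exchange_big; apply: eq_bigr => k _ /=.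
  by rewrite mxE big_distrr; apply: eq_bigr => i _ /=; rewrite mulrA.
rewrite (bigD1 j) //= delta // eqxx mul1r big1 ?addr0 // => i /andP[iA /negbTE ij].
by rewrite delta // ij mul0r.
Qed.

Lemma zbasis_sub_summand A' : {subset A' <= A} -> zbasis A b ->
  zindep A' b /\ direct_summand (zspan A' b).
Proof.
move=> sA'A [indb spanb]; pose C := [predD A & A'].
have splitA c : \sum_(i in A) c i *: b i =
    \sum_(i in A') c i *: b i + \sum_(i in C) c i *: b i.
  rewrite (bigID (mem A')) /=; congr (_ + _); apply: eq_bigl => i.
    by apply/andP/idP => [[]|iA'] //; split=> //; apply: sA'A.
  by rewrite !inE andbC.
have meet c d : \sum_(i in A') c i *: b i = \sum_(i in C) d i *: b i ->
    forall i, i \in A' -> c i = 0.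
  move=> ecd i iA'.
  suff /indb/(_ i (sA'A _ iA')) :
      \sum_(i in A) (if i \in A' then c i else - d i) *: b i = 0 by rewrite iA'.
  rewrite splitA (eq_bigr (fun i => c i *: b i)) => [|j ->] //.
  rewrite [X in _ + X](eq_bigr (fun i => - (d i *: b i))) => [|j].
    by rewrite sumrN ecd subrr.
  by rewrite /C !inE => /andP[/negbTE -> _]; rewrite scaleNr.
split=> [c c0|]; first by apply: (meet c (fun=> 0)); rewrite c0 big1 // => j _; rewrite scale0r.
exists (zspan C b); split; first exact: zspan_zsubmodule.
  by move=> x; have [c ->] := spanb x; rewrite splitA; do 2 eexists; split; [exists c|exists c|].
move=> x [c xc] [d xd]; rewrite xc big1 // => i iA'.
by rewrite (meet c d) ?scale0r // -xc -xd.
Qed.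

(* Projecting each ['e_k] onto the summand gives a left inverse of the square
   matrix of the family, which is then also a right inverse. *)
Lemma summand_zbasis : basis_of_summand A b n -> zbasis A b.
Proof.
case=> indb cardA [M [subM decomp capM]].
have subL := zspan_zsubmodule A b; have [_ LD LN] := subL.
have /fin_all_exists[l /all_and2[Ll Ml]] : forall k : 'I_n,
    exists l, zspan A b l /\ M ('e_k - l).
  by move=> k; have [l [m [Ll Mm ->]]] := decomp 'e_k; exists l; rewrite addrC addKr.
have /fin_all_exists[a la] : forall k : 'I_n, exists a : I -> int,
  l k = \sum_(i in A) a i *: b i := Ll.
have bl j : j \in A -> b j = \sum_k b j 0 k *: l k.
  move=> jA; apply/eqP; rewrite -subr_eq0; apply/eqP; apply: capM.
    exact: LD (zspan_mem jA) (LN _ (zsubmodule_sum _ _ subL Ll)).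
  rewrite {1}(row_sum_delta (b j)) -sumrB.
  under eq_bigr => k _ do rewrite -scalerBr.
  exact: zsubmodule_sum subM Ml.
have delta := zindep_coef_delta indb la bl.
split=> // x; rewrite (row_sum_delta x).
apply: (zsubmodule_sum _ _ subL) => k; exists (a k); move: k.
apply/coefmx_rowsmx_eq1; apply: mulmx1C_eqdim cardA _.
apply/matrixP => p q; rewrite !mxE; under eq_bigr => k _ do rewrite !mxE.
by rewrite delta ?enum_valP // (inj_eq enum_val_inj) eq_sym.
Qed.

End Families.

Section DualFamilies.
Variables (I J : finType) (A : {pred I}) (B : {pred J}).
Variables (b : I -> rV) (c : J -> rV) (f : I -> J).
Hypotheses (f_inj : {in A &, injective f}) (fAB : f @: A =i B).
Hypothesis dot_bc : forall i j, i \in A -> j \in B -> dot (b i) (c j) = (f i == j)%:R.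

Let f_in i : i \in A -> f i \in B.
Proof. by move=> iA; rewrite -fAB imset_f. Qed.

Lemma dot_dual_sumr (d : J -> int) i : i \in A ->
  dot (b i) (\sum_(j in B) d j *: c j) = d (f i).
Proof.
move=> iA; rewrite dot_sumr (bigD1 (f i)) ?f_in //= dot_bc ?f_in // eqxx mulr1.
by rewrite big1 ?addr0 // => j /andP[jB /negbTE fij]; rewrite dot_bc // eq_sym fij mulr0.
Qed.

Lemma dot_dual_suml (d : I -> int) i : i \in A ->
  dot (c (f i)) (\sum_(i' in A) d i' *: b i') = d i.
Proof.
move=> iA; rewrite dot_sumr (bigD1 i) //= dotC dot_bc ?f_in // eqxx mulr1.
rewrite big1 ?addr0 // => i' /andP[i'A i'i]; rewrite dotC dot_bc ?f_in //.
by rewrite (inj_in_eq f_inj) // (negbTE i'i) mulr0.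
Qed.

Lemma zbasis_dual : zbasis A b <-> zbasis B c.
Proof.
split=> [[indb spanb] | [indc spanc]]; split.
- move=> d d0 j; rewrite -fAB => /imsetP[i iA ->].
  by rewrite -(dot_dual_sumr d iA) d0 linear0.
- move=> x; exists (fun j => \sum_(i in A | f i == j) dot (b i) x).
  apply: (zspan_dot_inj spanb) => i iA; rewrite dot_dual_sumr //.
  rewrite (big_pred1 i) // => i'; rewrite !inE.
  by apply/andP/eqP => [[i'A /eqP/f_inj->]|->].
- by move=> d d0 i iA; rewrite -(dot_dual_suml d iA) d0 linear0.
- move=> x; exists (fun i => dot (c (f i)) x).
  apply: (zspan_dot_inj spanc) => j; rewrite -fAB => /imsetP[i iA ->].
  by rewrite dot_dual_suml.
Qed.

End DualFamilies.

End IntegerLattice.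

Section Graph.
Variables (G : graph) (n : nat) (nab : gE G -> gE G -> gE G).
Local Notation V := (gV G).
Local Notation E := (gE G).
Local Notation facet := (@facet G n nab).
Local Notation rV := ('rV[int]_n).

Hypothesis regG : regular G n.
Hypothesis nabP : is_connection nab.

Definition edges_at (v : V) : {set E} := [set e | src e == v].

Lemma card_edges_at v : #|edges_at v| = n.
Proof. exact: regG. Qed.

Lemma tgt_erev (e : E) : tgt (erev e) = src e.
Proof. by rewrite -src_erev erevK. Qed.

Lemma src_nab e e' : src e' = src e -> src (nab e e') = tgt e.
Proof. by case: nabP => + _ _; apply. Qed.

Lemma nabK e e' : src e' = src e -> nab (erev e) (nab e e') = e'.
Proof. by case: nabP => _ _; apply. Qed.

Lemma nabVK e e' : src e' = tgt e -> nab e (nab (erev e) e') = e'.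
Proof. by move=> se'; rewrite -{1}[e]erevK nabK // src_erev. Qed.

Lemma subadj_sym (F : {set V} * {set E}) :
  (forall e, e \in F.2 -> erev e \in F.2) -> symmetric (subadj F).
Proof.
move=> erevF; have sub x y : subadj F x y -> subadj F y x.
  move=> /existsP[e /andP[eF /andP[/eqP <- /eqP <-]]].
  by apply/existsP; exists (erev e); rewrite erevF // src_erev tgt_erev !eqxx.
by move=> x y; apply/idP/idP; apply: sub.
Qed.

Section Face.
Variables (k : nat) (F : {set V} * {set E}).
Hypothesis faceF : is_face nab k F.

Lemma face_neq0 : F.1 != set0.
Proof. by case/and5P: faceF. Qed.

Lemma face_src e : e \in F.2 -> src e \in F.1.
Proof. by move=> eF; case/and5P: faceF => _ /forall_inP/(_ e eF)/andP[]. Qed.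

Lemma face_erev e : e \in F.2 -> erev e \in F.2.
Proof. by move=> eF; case/and5P: faceF => _ /forall_inP/(_ e eF)/andP[]. Qed.

Lemma face_tgt e : e \in F.2 -> tgt e \in F.1.
Proof. by move/face_erev/face_src; rewrite src_erev. Qed.

Lemma face_valence v : v \in F.1 -> #|[set e in F.2 | src e == v]| = k.
Proof. by move=> vF; case/and5P: faceF => _ _ /forall_inP/(_ v vF)/eqP. Qed.

Lemma face_connect u w : u \in F.1 -> w \in F.1 -> connect (subadj F) u w.
Proof.
by move=> uF wF; case/and5P: faceF => _ _ _ /forall_inP/(_ u uF)/forall_inP/(_ w wF).
Qed.

Lemma face_nab e e' : e \in F.2 -> e' \in F.2 -> src e' = src e -> nab e e' \in F.2.
Proof.
move=> eF e'F /eqP se'; case/and5P: faceF => _ _ _ _.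
by move=> /forall_inP/(_ e eF)/forall_inP/(_ e' e'F)/implyP/(_ se').
Qed.

Lemma face_nabE e e' : e \in F.2 -> src e' = src e -> (nab e e' \in F.2) = (e' \in F.2).
Proof.
move=> eF se'; apply/idP/idP => [nF|]; last by move=> e'F; apply: face_nab.
rewrite -(nabK se'); apply: face_nab nF _; first exact: face_erev.
by rewrite src_erev src_nab.
Qed.

End Face.

(* The connection transports the edges at [v] along the connected face [F]. *)
Lemma face_le_at k k' F F' v : is_face nab k F -> is_face nab k' F' ->
  v \in F.1 -> v \in F'.1 -> (forall e, e \in F.2 -> src e = v -> e \in F'.2) ->
  face_le F F'.
Proof.
move=> faceF faceF' vF vF' sub_v.
pose Q w := w \in F'.1 /\ forall e, e \in F.2 -> src e = w -> e \in F'.2.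
have QF w : w \in F.1 -> Q w.
  move=> wF; apply: (connect_ind (face_connect faceF vF wF)) => // a b [_ sub_a].
  case/existsP=> e /andP[eF /andP[/eqP sa /eqP <-]].
  have eF' := sub_a e eF sa.
  split=> [|e'' e''F se'']; first exact: (face_tgt faceF' eF').
  have e1F : nab (erev e) e'' \in F.2.
    by apply: (face_nab faceF (face_erev faceF eF) e''F); rewrite src_erev.
  have se1 : src (nab (erev e) e'') = a by rewrite src_nab ?tgt_erev ?src_erev.
  rewrite -(nabVK se''); apply: (face_nab faceF' eF'); first exact: sub_a e1F se1.
  by rewrite se1.
apply/andP; split; apply/subsetP; first by move=> w /QF[].
by move=> e eF; have [_] := QF _ (face_src faceF eF); apply.
Qed.

Lemma face_le_anti (F F' : {set V} * {set E}) : face_le F F' -> face_le F' F -> F = F'.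
Proof.
case: F F' => [A B] [C D] /andP[/= AC BD] /andP[/= CA DB].
by congr pair; apply/eqP; rewrite eqEsubset ?AC ?BD ?CA ?DB.
Qed.

Lemma facet_face (F : facet) : is_face nab n.-1 (val F).
Proof. by case: F => F /= /andP[]. Qed.

Lemma facet_n_gt0 (F : facet) : (0 < n)%N.
Proof. by case: F => F /= /andP[]. Qed.

Lemma facet_has_edge (F : facet) : exists e : E, src e \in (val F).1.
Proof.
have /set0Pn[v vF] := face_neq0 (facet_face F).
have : (0 < #|edges_at v|)%N by rewrite card_edges_at (facet_n_gt0 F).
by case/card_gt0P => e; rewrite inE => /eqP ev; exists e; rewrite ev.
Qed.

(* The edge at [v] leaving [F]; the default is reached only when [v] is not a
   vertex of [F]. *)
Definition miss (v : V) (F : facet) : E :=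
  odflt (xchoose (facet_has_edge F)) [pick e | (src e == v) && (e \notin (val F).2)].

Lemma edges_at_setD_facet v (F : facet) : v \in (val F).1 ->
  edges_at v :\: (val F).2 = [set miss v F].
Proof.
move=> vF; have n_gt0 := facet_n_gt0 F.
have [e1 def_e1] : exists e1, edges_at v :\: (val F).2 = [set e1].
  apply/cards1P; rewrite cardsD card_edges_at.
  have -> : edges_at v :&: (val F).2 = [set e in (val F).2 | src e == v].
    by apply/setP => e; rewrite !inE andbC.
  by rewrite (face_valence (facet_face F) vF); apply/eqP; lia.
suff -> : miss v F = e1 by [].
have e1P e : (src e == v) && (e \notin (val F).2) = (e == e1).
  by rewrite -[e == e1]in_set1 -def_e1 !inE andbC.
by rewrite /miss; case: pickP => [e|/(_ e1)]; rewrite e1P ?eqxx // => /eqP.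
Qed.

Lemma src_miss v (F : facet) : v \in (val F).1 -> src (miss v F) = v.
Proof.
by move=> vF; have := set11 (miss v F); rewrite -(edges_at_setD_facet vF) !inE => /andP[_ /eqP].
Qed.

Lemma facet_edgesE v (F : facet) e : v \in (val F).1 -> src e = v ->
  (e \in (val F).2) = (e != miss v F).
Proof.
move=> vF se; have := congr1 (fun S : {set E} => e \in S) (edges_at_setD_facet vF).
by rewrite /= !inE se eqxx andbT => <-; rewrite negbK.
Qed.

Lemma miss_inj v : {in facets_at v &, injective (miss v)}.
Proof.
have le_miss (F F' : facet) : v \in (val F).1 -> v \in (val F').1 ->
    miss v F = miss v F' -> face_le (val F) (val F').
  move=> vF vF' eqm; apply: (face_le_at (facet_face F) (facet_face F') vF vF').
  by move=> e eF se; rewrite (facet_edgesE vF') // -eqm -(facet_edgesE vF).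
by move=> F F' vF vF' eqm; apply/val_inj/face_le_anti; apply: le_miss.
Qed.

Lemma miss_onto_of_zspan (lam : facet -> rV) v :
  (forall x, zspan (facets_at v) lam x) ->
  miss v @: facets_at v =i [pred e | src e == v].
Proof.
move=> spanl.
have sub : miss v @: facets_at v \subset edges_at v.
  by apply/subsetP => _ /imsetP[F vF ->]; rewrite inE src_miss.
suff -> : miss v @: facets_at v = edges_at v by move=> e; rewrite !inE.
apply/eqP; rewrite eqEcard sub card_edges_at card_in_imset; last exact: miss_inj.
exact: zspan_card_geq spanl.
Qed.

Lemma facets_above_at k P v (F : facet) : is_face nab k P -> v \in P.1 ->
  (F \in facets_above P) = (v \in (val F).1) && (miss v F \notin P.2).
Proof.
move=> faceP vP; rewrite inE; apply/idP/andP => [/andP[P1F P2F] | [vF missP]].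
  have vF : v \in (val F).1 by apply: subsetP P1F _ vP.
  split=> //; apply/negP => /(subsetP P2F).
  by rewrite (facet_edgesE vF) ?src_miss // eqxx.
apply: (face_le_at faceP (facet_face F) vP vF) => e eP se.
by rewrite (facet_edgesE vF se); apply: contraNneq missP => <-.
Qed.

Lemma vertex_face v : is_face nab 0 ([set v], set0).
Proof.
apply/and5P; split=> /=.
- by apply/set0Pn; exists v; rewrite inE.
- by apply/forall_inP => e; rewrite in_set0.
- by apply/forall_inP => w _; rewrite cards_eq0; apply/eqP/setP => e; rewrite !inE.
- by apply/forall_inP => u /set1P ->; apply/forall_inP => w /set1P ->; apply: connect0.
- by apply/forall_inP => e; rewrite in_set0.
Qed.

Lemma vertex_basis_characteristic (lam : facet -> rV) :
  vertex_basis_fun lam <-> characteristic_fun lam.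
Proof.
split=> [vbl k P faceP | charl v]; last first.
  apply: (@eq_zbasis _ _ (facets_above ([set v], set0))).
    by move=> F; rewrite !inE /face_le sub1set sub0set andbT.
  by apply: summand_zbasis; have := charl 0%N _ (vertex_face v); rewrite subn0.
have /set0Pn[v vP] := face_neq0 faceP.
have above_at (F : facet) : F \in facets_above P -> F \in facets_at v.
  by rewrite (facets_above_at _ faceP vP) => /andP[].
have [indl summand] := zbasis_sub_summand above_at (vbl v).
split=> //; rewrite -(card_in_imset (f := miss v)); last first.
  by move=> F F' /above_at vF /above_at vF'; apply: miss_inj.
have -> : miss v @: facets_above P = edges_at v :\: P.2.
  apply/setP => e; rewrite !inE; apply/imsetP/andP => [[F + ->] | [eP ev]].
    by rewrite (facets_above_at _ faceP vP) => /andP[vF ->]; rewrite src_miss.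
  have := miss_onto_of_zspan (vbl v).2 e; rewrite inE ev => /imsetP[F /[!inE] vF def_e].
  by exists F; rewrite // (facets_above_at _ faceP vP) vF -def_e.
rewrite cardsD card_edges_at -(face_valence faceP vP).
by congr (_ - #|pred_of_set _|)%N; apply/setP => e; rewrite !inE andbC.
Qed.

Definition dual_beta (lam : facet -> rV) (e : E) : rV :=
  epsilon (inhabits 0) (fun y => forall F : facet,
    src e \in (val F).1 -> dot (lam F) y = (e \notin (val F).2)%:R).

Section VertexBasisToTGraph.
Variable lam : facet -> rV.
Hypothesis vbl : vertex_basis_fun lam.
Local Notation beta := (dual_beta lam).

Lemma dual_beta_spec e (F : facet) : src e \in (val F).1 ->
  dot (lam F) (beta e) = (e \notin (val F).2)%:R.
Proof.
move: F; pattern (beta e); apply: epsilon_spec.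
have [y dy] := zbasis_dot_solve (fun F : facet => (e \notin (val F).2)%:R) (vbl (src e)).
by exists y => F; apply: dy.
Qed.

Lemma dot_dual_beta v (F : facet) e : v \in (val F).1 -> src e = v ->
  dot (lam F) (beta e) = (miss v F == e)%:R.
Proof. by move=> vF se; rewrite dual_beta_spec ?se // (facet_edgesE vF se) negbK eq_sym. Qed.

Lemma miss_onto v : miss v @: facets_at v =i [pred e | src e == v].
Proof. exact: miss_onto_of_zspan (vbl v).2. Qed.

Lemma exists_facet_missing e : exists2 F : facet, src e \in (val F).1 & miss (src e) F = e.
Proof.
have : e \in miss (src e) @: facets_at (src e) by rewrite miss_onto inE.
by case/imsetP=> F /[!inE] vF def_e; exists F.
Qed.

Lemma dual_beta_basis v : zbasis [pred e | src e == v] beta.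
Proof.
apply: (zbasis_dual (@miss_inj v) (@miss_onto v) _).1 (vbl v) => F e vF /eqP.
exact: dot_dual_beta.
Qed.

Lemma dual_beta_collinear e x :
    (forall F : facet, src e \in (val F).1 -> e \in (val F).2 -> dot (lam F) x = 0) ->
  exists c : int, x = c *: beta e.
Proof.
move=> orth; have [F0 vF0 missF0] := exists_facet_missing e.
exists (dot (lam F0) x); apply: (zspan_dot_inj (vbl (src e)).2) => F vF.
rewrite linearZ /= (dot_dual_beta vF) //.
have [missF|missF] := eqVneq (miss (src e) F) e.
  by rewrite (miss_inj vF vF0) ?missF // mulr1.
have eF : e \in (val F).2 by rewrite (facet_edgesE vF) // eq_sym.
by rewrite orth //= mulr0.
Qed.

Lemma dual_beta_erev e :
  exists2 d : int, (d == 1) || (d == -1) & beta (erev e) = - (d *: beta e).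
Proof.
have coll e1 : exists c : int, beta (erev e1) = c *: beta e1.
  apply: dual_beta_collinear => F vF e1F; have faceF := facet_face F.
  by rewrite dual_beta_spec ?(face_erev faceF) // src_erev (face_tgt faceF).
have [c ec] := coll e; have [c' ec'] := coll (erev e).
rewrite erevK ec scalerA in ec'.
have [F vF missF] := exists_facet_missing e.
have : c' * c = 1.
  have := congr1 (dot (lam F)) ec'; rewrite linearZ /= (dot_dual_beta vF) //.
  by rewrite missF eqxx mulr1.
move=> /intUnitRing.unitzPl; rewrite qualifE => unit_c.
exists (- c); last by rewrite ec scaleNr opprK.
by rewrite !eqr_oppLR opprK orbC.
Qed.

Lemma dual_beta_nab e e' : src e' = src e ->
  exists d : int, beta (nab e e') = beta e' + d *: beta e.
Proof.
move=> se'; have [d ed] : exists d : int, beta (nab e e') - beta e' = d *: beta e.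
  apply: dual_beta_collinear => F vF eF; have faceF := facet_face F.
  rewrite linearB /= !dual_beta_spec ?se' ?src_nab ?(face_tgt faceF) //.
  by rewrite (face_nabE faceF) // subrr.
by exists d; rewrite -ed addrC subrK.
Qed.

Lemma dual_beta_tgraph : tgraph_structure nab beta.
Proof. by split; [apply: dual_beta_erev | apply: dual_beta_basis | apply: dual_beta_nab]. Qed.

End VertexBasisToTGraph.

Section TGraphToVertexBasis.
Variable beta : E -> rV.
Hypothesis tgb : tgraph_structure nab beta.

Lemma tgraph_basis v : zbasis [pred e | src e == v] beta.
Proof. by case: tgb. Qed.

Lemma dot_erev_eq0 x e : dot x (beta e) = 0 -> dot x (beta (erev e)) = 0.
Proof.
by case: tgb => + _ _ => /(_ e)[d _ ->] xe; rewrite linearN linearZ /= xe mulr0 oppr0.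
Qed.

Lemma dot_nab x e e' : dot x (beta e) = 0 -> src e' = src e ->
  dot x (beta (nab e e')) = dot x (beta e').
Proof.
case: tgb => _ _ + xe se' => /(_ e e' se')[d ->].
by rewrite linearD linearZ /= xe mulr0 addr0.
Qed.

Lemma dot_nab_erev x e e' : dot x (beta e) = 0 -> src e' = tgt e ->
  dot x (beta (nab (erev e) e')) = dot x (beta e').
Proof. by move=> /dot_erev_eq0 xe se'; apply: dot_nab; rewrite ?src_erev. Qed.

Section OrthogonalFace.
Variables (x : rV) (v : V).

Definition orth_at (w : V) : {set E} := [set e | (src e == w) && (dot x (beta e) == 0)].

Definition orth_adj : rel V :=
  [rel a b | [exists e, [&& src e == a, tgt e == b & dot x (beta e) == 0]]].

Definition orth_comp : {set V} := [set w | connect orth_adj v w].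

Definition orth_face : {set V} * {set E} :=
  (orth_comp, [set e | (src e \in orth_comp) && (dot x (beta e) == 0)]).

Lemma card_orth_at_tgt e : dot x (beta e) = 0 -> #|orth_at (tgt e)| = #|orth_at (src e)|.
Proof.
move=> xe; have -> : orth_at (tgt e) = nab e @: orth_at (src e).
  apply/setP => e''; rewrite /orth_at inE; apply/andP/imsetP.
    case=> /eqP se'' /eqP xe''; exists (nab (erev e) e''); last by rewrite nabVK.
    rewrite inE src_nab ?tgt_erev ?src_erev // eqxx /=.
    by rewrite dot_nab_erev // xe''.
  case=> e' /[!inE] /andP[/eqP se' /eqP xe'] ->.
  by rewrite src_nab // dot_nab // xe' !eqxx.
apply: card_in_imset => e1 e2 /[!inE] /andP[/eqP s1 _] /andP[/eqP s2 _] eq12.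
by rewrite -(nabK s1) eq12 nabK.
Qed.

Lemma connect_orth_tgt e :
  connect orth_adj v (src e) -> dot x (beta e) = 0 -> connect orth_adj v (tgt e).
Proof.
move=> ve xe; apply: connect_trans ve (connect1 _).
by apply/existsP; exists e; rewrite !eqxx xe eqxx.
Qed.

Lemma orth_face_is_face : is_face nab #|orth_at v| orth_face.
Proof.
have orth_erev e : e \in orth_face.2 -> erev e \in orth_face.2.
  rewrite !inE src_erev => /andP[ve /eqP xe].
  by rewrite connect_orth_tgt ?dot_erev_eq0.
have conn_v w : connect orth_adj v w -> connect (subadj orth_face) v w.
  move=> vw; pose Q w := connect orth_adj v w /\ connect (subadj orth_face) v w.
  suff [] : Q w by [].
  apply: (connect_ind vw); first by split; apply: connect0.
  move=> a b [va va'] /existsP[e /and3P[/eqP sa /eqP tb /eqP xe]].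
  have eF : e \in orth_face.2 by rewrite !inE sa va xe eqxx.
  split; first by rewrite -tb connect_orth_tgt ?sa.
  by apply: connect_trans va' (connect1 _); apply/existsP; exists e; rewrite eF sa tb !eqxx.
apply/and5P; split.
- by apply/set0Pn; exists v; rewrite inE connect0.
- apply/forall_inP => e eF; rewrite orth_erev // andbT.
  by move: eF; rewrite !inE => /andP[].
- apply/forall_inP => w; rewrite inE => vw; apply/eqP.
  have <- : #|orth_at w| = #|orth_at v|.
    apply: (connect_ind (P := fun u => #|orth_at u| = #|orth_at v|) vw) => // a b <-.
    by case/existsP=> e /and3P[/eqP <- /eqP <- /eqP xe]; rewrite card_orth_at_tgt.
  congr #|pred_of_set _|; apply/setP => e; rewrite !inE.
  by case: (eqVneq (src e) w) => [->|]; rewrite ?vw ?andbT ?andbF.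
- apply/forall_inP => u; rewrite inE => vu; apply/forall_inP => w; rewrite inE => vw.
  apply: connect_trans (conn_v w vw).
  by rewrite (sym_connect_sym (subadj_sym orth_erev)); apply: conn_v.
- apply/forall_inP => e /[!inE] /andP[ve /eqP xe].
  apply/forall_inP => e' /[!inE] /andP[_ /eqP xe']; apply/implyP => /eqP se'.
  by rewrite src_nab // connect_orth_tgt // dot_nab // xe' eqxx.
Qed.

End OrthogonalFace.

Lemma tgraph_exists_facet_missing e0 :
  exists2 F : facet, src e0 \in (val F).1 & miss (src e0) F = e0.
Proof.
set v := src e0.
have [mu dmu] := zbasis_dot_solve (fun e => (e == e0)%:R) (tgraph_basis v).
have mu_e e : src e = v -> dot mu (beta e) = (e == e0)%:R.
  by move=> se; rewrite dotC dmu ?inE ?se.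
have e0v : e0 \in edges_at v by rewrite inE.
have n_gt0 : (0 < n)%N by rewrite -(card_edges_at v); apply/card_gt0P; exists e0.
have card_orth : #|orth_at mu v| = n.-1.
  have -> : orth_at mu v = edges_at v :\ e0.
    apply/setP => e; rewrite !inE; case: (eqVneq (src e) v) => [se|]; rewrite ?andbF //.
    by rewrite mu_e // pnatr_eq0 eqb0 andbT.
  by move: (card_edges_at v); rewrite (cardsD1 e0) e0v add1n => <-.
have facetF : is_facet n nab (orth_face mu v).
  by rewrite /is_facet n_gt0 -card_orth orth_face_is_face.
pose F : facet := exist _ (orth_face mu v) facetF.
have vF : v \in (val F).1 by rewrite inE connect0.
exists F => //; apply/eqP; rewrite eq_sym; apply/negPn.
by rewrite -(facet_edgesE vF) //= !inE mu_e // eqxx andbF.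
Qed.

Definition dual_lambda (F : facet) : rV :=
  epsilon (inhabits 0) (fun x => forall e,
    src e \in (val F).1 -> dot x (beta e) = (e \notin (val F).2)%:R).

Lemma dual_lambda_spec (F : facet) e : src e \in (val F).1 ->
  dot (dual_lambda F) (beta e) = (e \notin (val F).2)%:R.
Proof.
move: e; pattern (dual_lambda F); apply: epsilon_spec.
have faceF := facet_face F; have /set0Pn[v vF] := face_neq0 faceF.
have [x dx] := zbasis_dot_solve (fun e => (e \notin (val F).2)%:R) (tgraph_basis v).
exists x => e eF.
pose Q w := forall e, src e = w -> dot x (beta e) = (e \notin (val F).2)%:R.
suff : Q (src e) by apply.
apply: (connect_ind (P := Q) (face_connect faceF vF eF)).
  by move=> e1 se1; rewrite dotC dx ?inE ?se1.
move=> a b Qa /existsP[e1 /andP[e1F /andP[/eqP sa /eqP tb]]] e'' se''.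
have xe1 : dot x (beta e1) = 0 by rewrite Qa // e1F.
have se2 : src (nab (erev e1) e'') = a by rewrite src_nab ?tgt_erev ?src_erev ?tb.
rewrite -(dot_nab_erev xe1) ?tb // (Qa _ se2).
by rewrite (face_nabE faceF) ?(face_erev faceF) // src_erev tb.
Qed.

Lemma dot_dual_lambda v (F : facet) e : v \in (val F).1 -> src e = v ->
  dot (dual_lambda F) (beta e) = (miss v F == e)%:R.
Proof.
by move=> vF se; rewrite dual_lambda_spec ?se // (facet_edgesE vF se) negbK eq_sym.
Qed.

Lemma miss_onto_tgraph v : miss v @: facets_at v =i [pred e | src e == v].
Proof.
move=> e; rewrite inE; apply/imsetP/eqP => [[F vF ->] | <-]; first exact: src_miss.
by have [F] := tgraph_exists_facet_missing e; exists F.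
Qed.

Lemma dual_lambda_vertex_basis : vertex_basis_fun dual_lambda.
Proof.
move=> v; apply: (zbasis_dual (@miss_inj v) (@miss_onto_tgraph v) _).2 (tgraph_basis v).
by move=> F e vF /eqP; apply: dot_dual_lambda.
Qed.

End TGraphToVertexBasis.

Lemma dual_lambda_beta lam : vertex_basis_fun lam -> dual_lambda (dual_beta lam) = lam.
Proof.
move=> vbl; have tgb := dual_beta_tgraph vbl.
apply: functional_extensionality => F; have /set0Pn[v vF] := face_neq0 (facet_face F).
apply: (zspan_dot_inj (tgraph_basis tgb v).2) => e /eqP se.
by rewrite !(dotC (dual_beta lam e)) (dot_dual_lambda tgb vF se) (dot_dual_beta vbl vF se).
Qed.

Lemma dual_beta_lambda beta : tgraph_structure nab beta -> dual_beta (dual_lambda beta) = beta.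
Proof.
move=> tgb; have vbl := dual_lambda_vertex_basis tgb.
apply: functional_extensionality => e.
apply: (zspan_dot_inj (vbl (src e)).2) => F vF.
by rewrite (dot_dual_beta vbl vF) // (dot_dual_lambda tgb vF).
Qed.

End Graph.

Theorem proposition6p2 (n : nat) (G : graph) (nab : gE G -> gE G -> gE G) :
  gconnected G -> regular G n -> loopless G -> is_connection nab ->
  (exists phi : {lam : @facet G n nab -> 'rV[int]_n | @vertex_basis_fun G n nab lam} ->
                {lam : @facet G n nab -> 'rV[int]_n | @characteristic_fun G n nab lam},
     bijective phi) /\
  (exists psi : {lam : @facet G n nab -> 'rV[int]_n | @characteristic_fun G n nab lam} ->
                {beta : gE G -> 'rV[int]_n | @tgraph_structure G n nab beta},
     bijective psi).
Proof.
move=> _ regG _ nabP; have vb_char := vertex_basis_characteristic regG nabP.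
split.
  by apply: (sig_bijective (f := id) (g := id)) => // lam /vb_char.
apply: (sig_bijective (f := @dual_beta G n nab) (g := @dual_lambda G n nab)).
- by move=> lam /vb_char/(dual_beta_tgraph regG nabP).
- by move=> beta /(dual_lambda_vertex_basis regG nabP)/vb_char.
- by move=> lam /vb_char/(dual_lambda_beta regG nabP).
- by move=> beta /(dual_beta_lambda regG nabP).
Qed.
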